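(* Assume the setting and the nsCRAIG recurrence described in the context, and let $k\ge1$ be such that $q_1,\dots,q_k$, $v_j,t_j,r_j,\alpha_j$ ($j\le k$), $\beta_2,\dots,\beta_k$ and $g_k$ are defined. With $V_k=[v_1,\dots,v_k]$, $T_k=[t_1,\dots,t_k]$, $D_k=[r_1/\alpha_1,\dots,r_k/\alpha_k]$ and $L_k=V_k^TMV_k+D_k^TT_k$, one has $Q_k=D_kB_k$, $AQ_k=MV_kB_k$, $CQ_k=T_kB_k$, $Q_k^TNQ_k=I_k$, $A^TV_k+T_k=NQ_kH_k+Ng_ke_k^T$, and $H_k=B_k^TL_k^T$ where $L_k$ is unit lower triangular. Consequently, with $S=A^TM^{-1}A+C$, $N^{-1}SQ_k=Q_k(H_kB_k)+\alpha_kg_ke_k^T$, i.e. the recurrence implicitly performs the Arnoldi reduction of the preconditioned Schur complement to upper Hessenberg form $H_kB_k$.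
   Context: Setting: $M\in\mathbb{R}^{m\times m}$ is nonsymmetric and positive definite ($x^TMx>0$ for all $x\ne0$); $A\in\mathbb{R}^{m\times n}$ ($n\le m$) has full column rank; $C\in\mathbb{R}^{n\times n}$ is symmetric positive semidefinite; $b\in\mathbb{R}^n$ is nonzero; $N\in\mathbb{R}^{n\times n}$ is symmetric positive definite. Write $\|x\|_G=(x^TGx)^{1/2}$ for $G$ positive definite (for nonsymmetric $M$ this is the norm of its symmetric part). The generalized saddle point system is $Mu+Ap=0$, $A^Tu-Cp=b$, with unique solution $(u_*,p_* )$; $S=A^TM^{-1}A+C$. nsCRAIG recurrence (exact arithmetic): Initialization: $\beta_1=\|b\|_{N^{-1}}$, $q_1=N^{-1}b/\beta_1$, $Q_1=[q_1]$, $r_1=q_1$, $w_1=M^{-1}Aq_1$, $s_1=Cr_1$, $\alpha_1=(w_1^TMw_1+r_1^Ts_1)^{1/2}$, $v_1=w_1/\alpha_1$, $t_1=s_1/\alpha_1$, $\chi_1=\beta_1/\alpha_1$. For $k=1,2,\dots$: $\hat g_k=N^{-1}(A^Tv_k+t_k)$, $h_k=Q_k^TN\hat g_k\in\mathbb{R}^k$, $g_k=\hat g_k-Q_kh_k$, $\beta_{k+1}=\|g_k\|_N$; if $\beta_{k+1}=0$ the recurrence stops; otherwise $q_{k+1}=g_k/\beta_{k+1}$, $Q_{k+1}=[Q_k,q_{k+1}]$, $w_{k+1}=M^{-1}Aq_{k+1}-\beta_{k+1}v_k$, $r_{k+1}=q_{k+1}-(\beta_{k+1}/\alpha_k)r_k$,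 $s_{k+1}=Cr_{k+1}$, $\alpha_{k+1}=(w_{k+1}^TMw_{k+1}+r_{k+1}^Ts_{k+1})^{1/2}$, $v_{k+1}=w_{k+1}/\alpha_{k+1}$, $t_{k+1}=s_{k+1}/\alpha_{k+1}$, $\chi_{k+1}=-(\beta_{k+1}/\alpha_{k+1})\chi_k$. Matrices: $B_k\in\mathbb{R}^{k\times k}$ upper bidiagonal with $(B_k)_{ii}=\alpha_i$, $(B_k)_{i,i+1}=\beta_{i+1}$; $H_k\in\mathbb{R}^{k\times k}$ upper Hessenberg whose $j$-th column has entries $(H_k)_{ij}=(h_j)_i$ for $i\le j$, $(H_k)_{j+1,j}=\beta_{j+1}$ (if $j<k$), and zeros otherwise. The nsCRAIG iterates at step $k$ are $y_k=-B_k^{-1}H_k^{-1}(\beta_1e_1)$, $p^{(k)}=Q_ky_k$, $u^{(k)}=-M^{-1}Ap^{(k)}$, with $e_1$ the first unit vector of $\mathbb{R}^k$; $e_k$ denotes the $k$-th unit vector of $\mathbb{R}^k$. *)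

From HB Require Import structures.
From mathcomp Require Import all_boot all_order all_algebra.
Set Implicit Arguments. Unset Strict Implicit. Unset Printing Implicit Defensive.
Import Order.TTheory GRing.Theory Num.Theory.
Local Open Scope ring_scope.

Section NsCRAIG.
Variable R : rcfType.
Variables m n : nat.
Variable M : 'M[R]_m.
Variable A : 'M[R]_(m, n).
Variable C : 'M[R]_n.
Variable N : 'M[R]_n.
Variable b : 'cV[R]_n.

Definition Gnorm p (G : 'M[R]_p) (x : 'cV[R]_p) : R :=
  Num.sqrt ((x^T *m G *m x) 0 0).

Record stepdata := StepData {
  sd_q : 'cV[R]_n; sd_w : 'cV[R]_m; sd_r : 'cV[R]_n; sd_s : 'cV[R]_n;
  sd_alpha : R; sd_v : 'cV[R]_m; sd_t : 'cV[R]_n; sd_beta : R }.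

Definition init_step : stepdata :=
  let b1 := Gnorm (invmx N) b in
  let q1 := b1^-1 *: (invmx N *m b) in
  let r1 := q1 in
  let w1 := invmx M *m (A *m q1) in
  let s1 := C *m r1 in
  let a1 := Num.sqrt ((w1^T *m M *m w1) 0 0 + (r1^T *m s1) 0 0) in
  StepData q1 w1 r1 s1 a1 (a1^-1 *: w1) (a1^-1 *: s1) b1.

Definition next_step (hs : seq stepdata) : stepdata :=
  let lst := last init_step hs in
  let gh := invmx N *m (A^T *m sd_v lst + sd_t lst) in
  let g := gh - \sum_(x <- hs) ((sd_q x)^T *m N *m gh) 0 0 *: sd_q x in
  let bt := Gnorm N g in
  let q' := bt^-1 *: g in
  let w' := invmx M *m (A *m q') - bt *: sd_v lst in
  let r' := q' - (bt / sd_alpha lst) *: sd_r lst in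
  let s' := C *m r' in
  let a' := Num.sqrt ((w'^T *m M *m w') 0 0 + (r'^T *m s') 0 0) in
  StepData q' w' r' s' a' (a'^-1 *: w') (a'^-1 *: s') bt.

(* hist k = [:: data_1; ...; data_{k+1}] *)
Fixpoint hist (k : nat) : seq stepdata :=
  match k with
  | 0 => [:: init_step]
  | k'.+1 => rcons (hist k') (next_step (hist k'))
  end.

(* data of step j (1-indexed, j >= 1) *)
Definition sd (j : nat) : stepdata := last init_step (hist j.-1).

Definition qv j := sd_q (sd j).
Definition wv j := sd_w (sd j).
Definition rv j := sd_r (sd j).
Definition sv j := sd_s (sd j).
Definition alpha j := sd_alpha (sd j).
Definition vv j := sd_v (sd j).
Definition tv j := sd_t (sd j).
Definition beta j := sd_beta (sd j).

Definition ghat j : 'cV[R]_n := invmx N *m (A^T *m vv j + tv j).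
Definition hcoef j i : R := ((qv i)^T *m N *m ghat j) 0 0.
Definition gv j : 'cV[R]_n :=
  ghat j - \sum_(1 <= i < j.+1) hcoef j i *: qv i.

(* matrices (column index jj : 'I_k corresponds to the 1-indexed jj.+1) *)
Definition Qk k : 'M[R]_(n, k) := \matrix_(i < n, jj < k) qv jj.+1 i 0.
Definition Vk k : 'M[R]_(m, k) := \matrix_(i < m, jj < k) vv jj.+1 i 0.
Definition Tk k : 'M[R]_(n, k) := \matrix_(i < n, jj < k) tv jj.+1 i 0.
Definition Dk k : 'M[R]_(n, k) :=
  \matrix_(i < n, jj < k) (rv jj.+1 i 0 / alpha jj.+1).
Definition Bk k : 'M[R]_k :=
  \matrix_(ii < k, jj < k)
    (if ii == jj :> nat then alpha ii.+1
     else if jj == ii.+1 :> nat then beta jj.+1 else 0).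
Definition Hk k : 'M[R]_k :=
  \matrix_(ii < k, jj < k)
    (if (ii <= jj)%N then hcoef jj.+1 ii.+1
     else if ii == jj.+1 :> nat then beta jj.+1.+1 else 0).
Definition Lk k : 'M[R]_k := (Vk k)^T *m M *m Vk k + (Dk k)^T *m Tk k.

End NsCRAIG.

Definition ek (R : rcfType) (k : nat) : 'cV[R]_k :=
  \col_(i < k) (if i == k.-1 :> nat then 1 else 0).

Definition unit_lower_trig (R : rcfType) k (L : 'M[R]_k) : Prop :=
  is_trig_mx L /\ (forall i : 'I_k, L i i = 1).

Definition posdef (R : rcfType) p (G : 'M[R]_p) : Prop :=
  forall x : 'cV[R]_p, x != 0 -> 0 < (x^T *m G *m x) 0 0.
Definition possemidef (R : rcfType) p (G : 'M[R]_p) : Prop :=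
  forall x : 'cV[R]_p, 0 <= (x^T *m G *m x) 0 0.

(* The upper bidiagonal [B_k] encodes the two-term recurrences of nsCRAIG: the definitions
   of [r_(j+1)], [w_(j+1)] and [s_(j+1) = C r_(j+1)] say that column [j+1] of [D_k B_k],
   [V_k B_k] and [T_k B_k] is [q_(j+1)], [M^-1 A q_(j+1)] and [C q_(j+1)].  The [q_j] are
   [N]-orthonormal because [g_j] is the Gram--Schmidt residual of [ghat_j], and rearranging
   the definition of [g_j] gives [A^T V_k + T_k = N Q_k H_k + N g_k e_k^T].  Multiplying by
   [Q_k^T] and substituting [A Q_k = M V_k B_k], [Q_k = D_k B_k] gives [H_k = B_k^T L_k^T].
   As [H_k] is Hessenberg and [B_k] bidiagonal with nonzero diagonal, [L_k B_k = H_k^T] forces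
   [L_k] to be lower triangular, and the normalisation of [alpha_j] is [L_jj = 1].  Finally
   [S Q_k = (A^T V_k + T_k) B_k] and [e_k^T B_k = alpha_k e_k^T] give the Arnoldi relation. *)

From Pilot Require Import Defs.
From HB Require Import structures.
From mathcomp Require Import all_boot all_order all_algebra.
From mathcomp Require Import zify ring.
Import Order.TTheory GRing.Theory Num.Theory.
Local Open Scope ring_scope.
Set Implicit Arguments. Unset Strict Implicit. Unset Printing Implicit Defensive.

Section ColumnMatrices.
Variable R : comNzRingType.

(* Column [l : 'I_k] of [colsmx k F] is [F l.+1]: columns are numbered from 1 as in the paper. *)
Definition colsmx p k (F : nat -> 'cV[R]_p) : 'M[R]_(p, k) :=
  \matrix_(i < p, l < k) F l.+1 i 0.

Lemma eq_colsmx p k (F G : nat -> 'cV[R]_p) :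
  (forall j, (0 < j <= k)%N -> F j = G j) -> colsmx k F = colsmx k G.
Proof. by move=> eqFG; apply/matrixP => i l; rewrite !mxE eqFG ?ltn_ord. Qed.

Lemma colsmxD p k (F G : nat -> 'cV[R]_p) :
  colsmx k F + colsmx k G = colsmx k (fun j => F j + G j).
Proof. by apply/matrixP => i l; rewrite !mxE. Qed.

Lemma mulmx_colsmx p q k (X : 'M[R]_(p, q)) (F : nat -> 'cV[R]_q) :
  X *m colsmx k F = colsmx k (fun j => X *m F j).
Proof. by apply/matrixP => i l; rewrite !mxE; apply: eq_bigr => j _; rewrite mxE. Qed.

Lemma tr_colsmx_mul p k1 k2 (F G : nat -> 'cV[R]_p) :
  (colsmx k1 F)^T *m colsmx k2 G = \matrix_(i < k1, j < k2) ((F i.+1)^T *m G j.+1) 0 0.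
Proof. by apply/matrixP => i j; rewrite !mxE; apply: eq_bigr => l _; rewrite !mxE. Qed.

Lemma tr_colsmx_mulcol p k (F : nat -> 'cV[R]_p) (x : 'cV[R]_p) :
  (colsmx k F)^T *m x = \col_(i < k) ((F i.+1)^T *m x) 0 0.
Proof. by apply/matrixP => i j; rewrite (ord1 j) !mxE; apply: eq_bigr => l _; rewrite !mxE. Qed.

Definition bidiag k (a c : nat -> R) : 'M[R]_k :=
  \matrix_(ii < k, jj < k)
    (if ii == jj :> nat then a ii.+1 else if jj == ii.+1 :> nat then c jj.+1 else 0).

Definition bidiag_col p (a c : nat -> R) (F : nat -> 'cV[R]_p) j :=
  a j *: F j + (if (1 < j)%N then c j *: F j.-1 else 0).

Lemma colsmx_mul_bidiag p k (a c : nat -> R) (F : nat -> 'cV[R]_p) :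
  colsmx k F *m bidiag k a c = colsmx k (bidiag_col a c F).
Proof.
apply/matrixP => i jj; rewrite /colsmx /bidiag !mxE.
rewrite (eq_bigr (fun l : 'I_k => (if l == jj :> nat then a jj.+1 * F jj.+1 i 0 else 0)
   + (if (0 < jj)%N && (l == jj.-1 :> nat) then c jj.+1 * F jj i 0 else 0))).
  rewrite big_split -!big_mkcond (big_ord1_eq _ (fun=> _)).
  rewrite (big_ord1_cond_eq _ (fun=> _) (fun=> (0 < jj)%N)) ltn_ord /bidiag_col.
  rewrite ltnS (leq_ltn_trans (leq_pred jj) (ltn_ord jj)).
  by case: (0 < _)%N; rewrite !mxE.
move=> l _; rewrite !mxE.
have [->|nel] := eqVneq (l : nat) jj.
  have -> : ((0 < jj)%N && (jj == jj.-1 :> nat)) = false by apply/negbTE; lia.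
  by rewrite addr0 mulrC.
have [eqj|nej] := eqVneq (jj : nat) l.+1; first by rewrite eqj /= eqxx add0r mulrC.
by rewrite mulr0 add0r; case: ifP => // /andP[jpos /eqP eql]; case/eqP: nej; rewrite eql prednK.
Qed.
End ColumnMatrices.

Section UnitVector.
Variable R : rcfType.

Lemma mulmx_ekT p k (x : 'cV[R]_p) :
  x *m (ek R k)^T = colsmx k (fun j => if j == k then x else 0).
Proof.
apply/matrixP => i l; rewrite !mxE big_ord1 !mxE.
by have := ltn_ord l; case: eqP => ?; case: eqP => ? ?; rewrite ?mulr1 ?mulr0 ?mxE //; lia.
Qed.

Lemma ekT_mul_bidiag k (a c : nat -> R) : (0 < k)%N ->
  (ek R k)^T *m bidiag k a c = a k *: (ek R k)^T.
Proof.
move=> k_gt0; apply/matrixP => i jj; rewrite (ord1 i) !mxE.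
rewrite (eq_bigr (fun l : 'I_k => if l == k.-1 :> nat then
    (if k.-1 == jj :> nat then a k else 0) else 0)); last first.
  move=> l _; rewrite !mxE; case: eqP => [->|_]; last by rewrite mul0r.
  rewrite mul1r prednK //; case: eqP => // _.
  by rewrite (_ : (jj == k :> nat) = false) //; apply/eqP; have := ltn_ord jj; lia.
rewrite -big_mkcond (big_ord1_eq _ (fun=> _)) prednK // leqnn eq_sym.
by case: eqP; rewrite ?mulr1 ?mulr0.
Qed.

End UnitVector.

Lemma posdef_unitmx (R : rcfType) p (X : 'M[R]_p) : posdef X -> X \in unitmx.
Proof.
move=> Xpd; rewrite -row_free_unit -kermx_eq0; apply/eqP/row_matrixP => i.
rewrite row0; set u := row i (kermx X).
have uX0 : u *m X = 0 by apply/sub_kermxP; exact: row_sub.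
have [//|u_neq0] := eqVneq u 0.
by have := Xpd u^T; rewrite trmx_eq0 trmxK uX0 mul0mx mxE ltxx => /(_ u_neq0).
Qed.

Lemma sqr_sqrtr_neq0 (R : rcfType) (a : R) : Num.sqrt a != 0 -> Num.sqrt a ^+ 2 = a.
Proof. by rewrite sqrtr_eq0 -ltNge => /ltW; exact: sqr_sqrtr. Qed.

Section SymmetricForm.
Variables (R : fieldType) (n : nat) (N : 'M[R]_n).
Hypothesis N_sym : N^T = N.

Definition dotN (x y : 'cV[R]_n) : R := (x^T *m N *m y) 0 0.

Lemma dotNC x y : dotN x y = dotN y x.
Proof.
have tr11 (X : 'M[R]_1) : X^T 0 0 = X 0 0 by rewrite mxE.
by rewrite /dotN -[LHS]tr11 !trmx_mul trmxK N_sym mulmxA.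
Qed.

Lemma dotNBr x y z : dotN x (y - z) = dotN x y - dotN x z.
Proof. by rewrite /dotN mulmxBr !mxE. Qed.

Lemma dotNZr x a y : dotN x (a *: y) = a * dotN x y.
Proof. by rewrite /dotN -scalemxAr mxE. Qed.

Lemma dotNZl x a y : dotN (a *: x) y = a * dotN x y.
Proof. by rewrite dotNC dotNZr dotNC. Qed.

Lemma dotN_sumr x (lo hi : nat) (F : nat -> 'cV[R]_n) :
  dotN x (\sum_(lo <= l < hi) F l) = \sum_(lo <= l < hi) dotN x (F l).
Proof. by rewrite /dotN mulmx_sumr summxE. Qed.

End SymmetricForm.

Section Recurrence.
Variables (R : rcfType) (m n : nat).
Variables (M : 'M[R]_m) (A : 'M[R]_(m, n)) (C N : 'M[R]_n) (b : 'cV[R]_n).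

Local Notation sd := (sd M A C N b).
Local Notation hist := (hist M A C N b).
Local Notation q := (qv M A C N b).
Local Notation w := (wv M A C N b).
Local Notation r := (rv M A C N b).
Local Notation s := (sv M A C N b).
Local Notation al := (alpha M A C N b).
Local Notation be := (beta M A C N b).
Local Notation v := (vv M A C N b).
Local Notation t := (tv M A C N b).
Local Notation g := (gv M A C N b).
Local Notation gh := (ghat M A C N b).
Local Notation hc := (hcoef M A C N b).

Lemma sd_succ j : (0 < j)%N -> sd j.+1 = next_step M A C N b (hist j.-1).
Proof. by case: j => // j _; rewrite /Defs.sd /= last_rcons. Qed.

Lemma sd_init_or_next j :
  sd j = init_step M A C N b \/ exists hs, sd j = next_step M A C N b hs.
Proof. by case: j => [|[|j]]; [left | left | right; exists (hist j); rewrite sd_succ]. Qed.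

Lemma big_hist j (F : stepdata R m n -> 'cV[R]_n) : (0 < j)%N ->
  \sum_(x <- hist j.-1) F x = \sum_(1 <= i < j.+1) F (sd i).
Proof.
have hist_map i : hist i = [seq sd l | l <- iota 1 i.+1].
  elim: i => [|i IHi] //.
  by rewrite -[i.+2]addn1 iotaD map_cat -IHi cats1 /= /Defs.sd add1n /= last_rcons.
by case: j => // j _; rewrite hist_map big_map.
Qed.

Lemma qvS j : (0 < j)%N -> q j.+1 = (be j.+1)^-1 *: g j.
Proof. by move=> j_gt0; rewrite /qv /beta sd_succ // /next_step /= big_hist. Qed.

Lemma wvS j : (0 < j)%N -> w j.+1 = invmx M *m (A *m q j.+1) - be j.+1 *: v j.
Proof. by move=> j_gt0; rewrite /wv /qv /beta /vv sd_succ // /next_step /= big_hist. Qed.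

Lemma rvS j : (0 < j)%N -> r j.+1 = q j.+1 - (be j.+1 / al j) *: r j.
Proof. by move=> j_gt0; rewrite /rv /qv /beta /alpha sd_succ // /next_step /= big_hist. Qed.

Lemma betaS j : (0 < j)%N -> be j.+1 = Gnorm N (g j).
Proof. by move=> j_gt0; rewrite /beta sd_succ // /next_step /= big_hist. Qed.

Lemma svE j : s j = C *m r j.
Proof. by rewrite /sv /rv; case: (sd_init_or_next j) => [->|[hs ->]]. Qed.

Lemma vvE j : v j = (al j)^-1 *: w j.
Proof. by rewrite /vv /wv /alpha; case: (sd_init_or_next j) => [->|[hs ->]]. Qed.

Lemma tvE j : t j = (al j)^-1 *: s j.
Proof. by rewrite /tv /sv /alpha; case: (sd_init_or_next j) => [->|[hs ->]]. Qed.

Lemma alphaE j : al j = Num.sqrt (((w j)^T *m M *m w j) 0 0 + ((r j)^T *m s j) 0 0).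
Proof. by rewrite /wv /sv /rv /alpha; case: (sd_init_or_next j) => [->|[hs ->]]. Qed.

Local Notation dot := (dotN N).

Hypothesis M_pd : posdef M.
Hypothesis C_sym : C^T = C.
Hypothesis N_sym : N^T = N.
Hypothesis N_pd : posdef N.
Hypothesis b_neq0 : b != 0.

Let M_unit : M \in unitmx. Proof. exact: posdef_unitmx. Qed.
Let N_unit : N \in unitmx. Proof. exact: posdef_unitmx. Qed.

Lemma dotN_Ninvb : dot (invmx N *m b) (invmx N *m b) = (b^T *m invmx N *m b) 0 0.
Proof. by rewrite /dotN trmx_mul trmx_inv N_sym -!mulmxA mulKVmx. Qed.

Lemma beta1_neq0 : be 1 != 0.
Proof.
rewrite /beta /= /Gnorm sqrtr_eq0 -ltNge -dotN_Ninvb; apply: N_pd.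
by apply: contra b_neq0 => /eqP Nb0; rewrite -(mulKVmx N_unit b) Nb0 mulmx0.
Qed.

Lemma dotN_qv1 : dot (q 1) (q 1) = 1.
Proof.
have be1 := beta1_neq0.
have be1_sqr : be 1 ^+ 2 = (b^T *m invmx N *m b) 0 0 := sqr_sqrtr_neq0 be1.
by rewrite [q 1]/= dotNZl // dotNZr dotN_Ninvb -be1_sqr -[Gnorm _ _]/(be 1); field.
Qed.

Lemma dotN_qv_gv j :
  (forall i i', (1 <= i <= j)%N -> (1 <= i' <= j)%N -> dot (q i) (q i') = (i == i')%:R) ->
  forall i, (1 <= i <= j)%N -> dot (q i) (g j) = 0.
Proof.
move=> qo i le1ij; rewrite /gv dotNBr dotN_sumr.
rewrite (eq_big_nat _ _ (F2 := fun l => if l == i then hc j i else 0)).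
  by rewrite -big_mkcond big_nat1_eq le1ij subrr.
move=> l le1lj; rewrite dotNZr qo //.
by have [->|_] := eqVneq l i; rewrite ?mulr1 ?mulr0.
Qed.

Variable k : nat.
Hypothesis k_gt0 : (0 < k)%N.
Hypothesis beta_neq0 : forall j, (2 <= j <= k)%N -> be j != 0.
Hypothesis alpha_neq0 : forall j, (1 <= j <= k)%N -> al j != 0.

Lemma qv_orthonormal j : (j <= k)%N -> forall i i', (1 <= i <= j)%N -> (1 <= i' <= j)%N ->
  dot (q i) (q i') = (i == i')%:R.
Proof.
elim: j => [|j IHj] le_jk i i' lei lei'; first lia.
case: (posnP j) lei lei' => [j0|j_gt0] lei lei'.
  have -> : i = 1%N by lia.
  have -> : i' = 1%N by lia.
  exact: dotN_qv1.
have {}IHj := IHj (ltnW le_jk).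
have be_neq0 : be j.+1 != 0 by apply: beta_neq0; lia.
have be_sqr : dot (g j) (g j) = be j.+1 ^+ 2.
  by move: be_neq0; rewrite betaS // /Gnorm => /sqr_sqrtr_neq0 ->.
have q_qS l : (1 <= l <= j)%N -> dot (q l) (q j.+1) = 0.
  by move=> lel; rewrite qvS // dotNZr dotN_qv_gv ?mulr0.
have [-> | nei] := eqVneq i j.+1; have [-> | nei'] := eqVneq i' j.+1.
- by rewrite qvS // dotNZl // dotNZr be_sqr -[true%:R]/(1 : R); field.
- by rewrite dotNC // q_qS //; lia.
- by rewrite q_qS ?(negbTE nei) //; lia.
- by apply: IHj; lia.
Qed.

Definition dv j := (al j)^-1 *: r j.

Lemma qv_bidiag j : (1 <= j <= k)%N -> q j = bidiag_col al be dv j.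
Proof.
move=> lej; rewrite /bidiag_col /dv scalerA mulfV ?alpha_neq0 // scale1r.
by case: j lej => [|[|j]] lej //=; rewrite ?addr0 // rvS // scalerA subrK.
Qed.

Lemma mulmx_A_qv j : (1 <= j <= k)%N -> A *m q j = M *m bidiag_col al be v j.
Proof.
move=> lej; rewrite /bidiag_col vvE scalerA mulfV ?alpha_neq0 // scale1r.
case: j lej => [|[|j]] lej //=.
  by rewrite addr0 -[w 1]/(invmx M *m (A *m q 1)) mulKVmx.
by rewrite wvS // subrK mulKVmx.
Qed.

Lemma mulmx_C_qv j : (1 <= j <= k)%N -> C *m q j = bidiag_col al be t j.
Proof.
move=> lej; rewrite /bidiag_col tvE scalerA mulfV ?alpha_neq0 // scale1r svE.
case: j lej => [|[|j]] lej //=; first by rewrite addr0.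
by rewrite tvE svE scalerA scalemxAr -mulmxDr rvS // subrK.
Qed.

Local Notation Q := (Qk M A C N b k).
Local Notation V := (Vk M A C N b k).
Local Notation T := (Tk M A C N b k).
Local Notation D := (Dk M A C N b k).
Local Notation B := (Bk M A C N b k).
Local Notation H := (Hk M A C N b k).
Local Notation L := (Lk M A C N b k).

Lemma Qk_colsmx : Q = colsmx k q. Proof. by []. Qed.
Lemma Vk_colsmx : V = colsmx k v. Proof. by []. Qed.
Lemma Tk_colsmx : T = colsmx k t. Proof. by []. Qed.
Lemma Dk_colsmx : D = colsmx k dv.
Proof. by apply/matrixP => i l; rewrite !mxE mulrC. Qed.
Lemma Bk_bidiag : B = bidiag k al be. Proof. by []. Qed.

Lemma Qk_factor : Q = D *m B.
Proof.
rewrite Dk_colsmx Bk_bidiag colsmx_mul_bidiag.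
by apply: eq_colsmx => j /qv_bidiag.
Qed.

Lemma mulmx_A_Qk : A *m Q = M *m V *m B.
Proof.
rewrite -mulmxA Vk_colsmx Bk_bidiag colsmx_mul_bidiag !mulmx_colsmx.
by apply: eq_colsmx => j /mulmx_A_qv.
Qed.

Lemma mulmx_C_Qk : C *m Q = T *m B.
Proof.
rewrite Tk_colsmx Bk_bidiag colsmx_mul_bidiag mulmx_colsmx.
by apply: eq_colsmx => j /mulmx_C_qv.
Qed.

Lemma Qk_orthonormal : Q^T *m N *m Q = 1%:M.
Proof.
rewrite -mulmxA Qk_colsmx mulmx_colsmx tr_colsmx_mul; apply/matrixP => i j.
rewrite [LHS]mxE [RHS]mxE mulmxA.
by apply: (qv_orthonormal (leqnn k) (i := i.+1) (i' := j.+1)); rewrite ltn_ord.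
Qed.

Definition QH_col j :=
  \sum_(1 <= l < j.+1) hc j l *: q l + (if (j < k)%N then be j.+1 *: q j.+1 else 0).

Lemma mulmx_Qk_Hk : Q *m H = colsmx k QH_col.
Proof.
apply/matrixP => i jj; rewrite !mxE summxE.
rewrite (eq_bigr (fun l : 'I_k => (if (l < jj.+1)%N then hc jj.+1 l.+1 * q l.+1 i 0 else 0)
   + (if l == jj.+1 :> nat then be jj.+2 * q jj.+2 i 0 else 0))); last first.
  move=> l _; rewrite !mxE ltnS; case: leqP => [le_ljj|lt_jjl].
    by rewrite (_ : (l == jj.+1 :> nat) = false) ?addr0 1?mulrC //; apply/eqP; lia.
  by case: eqP => [->|_]; rewrite ?add0r ?mulr0 // mulrC.
rewrite big_split /= -!big_mkcond.
rewrite -(big_ord_widen _ (fun l => hc jj.+1 l.+1 * q l.+1 i 0) (ltn_ord jj)).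
rewrite big_add1 big_mkord; congr (_ + _); first by apply: eq_bigr => l _; rewrite mxE.
rewrite (big_ord1_eq _ (fun=> _)).
by case: ifP; rewrite ?mxE.
Qed.

Lemma mulmx_N_ghat j : N *m gh j = A^T *m v j + t j.
Proof. by rewrite /ghat mulKVmx. Qed.

Lemma ghat_QH_col j : (1 <= j <= k)%N -> gh j = QH_col j + (if j == k then g k else 0).
Proof.
move=> lej; rewrite /QH_col -addrA -[gh j](subrK (\sum_(1 <= l < j.+1) hc j l *: q l)).
rewrite -/(g j) addrC; congr (_ + _).
have [-> | ne_jk] := eqVneq j k; first by rewrite ltnn add0r.
rewrite (_ : (j < k)%N) ?addr0; last by lia.
by rewrite qvS ?scalerA ?mulfV ?scale1r ?beta_neq0 //; lia.
Qed.

Lemma AtVk_add_Tk : A^T *m V + T = N *m Q *m H + N *m g k *m (ek R k)^T.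
Proof.
rewrite Vk_colsmx Tk_colsmx -mulmxA mulmx_Qk_Hk -mulmxA mulmx_ekT !mulmx_colsmx !colsmxD.
apply: eq_colsmx => j lej; rewrite -mulmx_N_ghat ghat_QH_col // mulmxDr.
by case: (j == k); rewrite ?mulmx0.
Qed.

Lemma trQk_N_gv : Q^T *m N *m g k = 0.
Proof.
rewrite -mulmxA Qk_colsmx tr_colsmx_mulcol; apply/matrixP => i j; rewrite [LHS]mxE [RHS]mxE mulmxA.
apply: (dotN_qv_gv (qv_orthonormal (leqnn k))).
by rewrite ltn_ord.
Qed.

Lemma trDk_Tk : D^T *m T = T^T *m D.
Proof.
rewrite Dk_colsmx Tk_colsmx !tr_colsmx_mul; apply/matrixP => i j.
rewrite [LHS]mxE [RHS]mxE /dv !tvE !svE !linearZ /= -!scalemxAl.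
by rewrite trmx_mul C_sym mulmxA.
Qed.

Lemma Hk_factor : H = B^T *m L^T.
Proof.
have -> : H = Q^T *m (A^T *m V + T).
  by rewrite AtVk_add_Tk mulmxDr !mulmxA Qk_orthonormal mul1mx trQk_N_gv mul0mx addr0.
rewrite mulmxDr mulmxA -trmx_mul mulmx_A_Qk Qk_factor /Lk linearD /=.
by rewrite !trmx_mul !trmxK -trDk_Tk !mulmxDr !mulmxA.
Qed.

Lemma N_Schur_Qk : invmx N *m (A^T *m invmx M *m A + C) *m Q
   = Q *m (H *m B) + al k *: (g k *m (ek R k)^T).
Proof.
have SQ : (A^T *m invmx M *m A + C) *m Q = (A^T *m V + T) *m B.
  by rewrite !mulmxDl mulmx_C_Qk -!mulmxA mulmx_A_Qk -!mulmxA mulKmx.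
rewrite -mulmxA SQ AtVk_add_Tk mulmxDl mulmxDr -!mulmxA !mulKmx //.
by rewrite Bk_bidiag ekT_mul_bidiag // -scalemxAr.
Qed.

Lemma Lk_entry (i j : 'I_k) :
  L i j = ((v i.+1)^T *m M *m v j.+1) 0 0 + ((dv i.+1)^T *m t j.+1) 0 0.
Proof.
rewrite /Lk -mulmxA Vk_colsmx mulmx_colsmx Dk_colsmx Tk_colsmx.
by rewrite !tr_colsmx_mul -mulmxA !mxE.
Qed.

Lemma Lk_diag (i : 'I_k) : L i i = 1.
Proof.
have al_neq0 : al i.+1 != 0 by apply: alpha_neq0; rewrite ltn_ord.
have al_sqr : al i.+1 ^+ 2 = ((w i.+1)^T *m M *m w i.+1) 0 0 + ((r i.+1)^T *m s i.+1) 0 0.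
  by move: al_neq0; rewrite alphaE => /sqr_sqrtr_neq0.
rewrite Lk_entry /dv vvE tvE !linearZ /= -!scalemxAl.
have entryZ (a : R) (X : 'M[R]_1) : (a *: X) 0 0 = a * X 0 0 by rewrite mxE.
by rewrite !entryZ -!mulrDr -al_sqr; field.
Qed.

Lemma Hk_sub (c : 'I_k) a (lt_ak : (a.+1 < k)%N) :
  H (Ordinal lt_ak) c = al a.+2 * L c (Ordinal lt_ak) + be a.+2 * L c (Ordinal (ltnW lt_ak)).
Proof.
have L_cols : L = colsmx k (fun j => \col_i L i (insubd i j.-1)).
  by apply/matrixP => i l; rewrite !mxE valKd.
rewrite Hk_factor -trmx_mul mxE {1}L_cols Bk_bidiag colsmx_mul_bidiag mxE /bidiag_col.
have insubd_ord x (lt_xk : (x < k)%N) : insubd c x = Ordinal lt_xk.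
  by apply: val_inj; rewrite val_insubd lt_xk.
by rewrite (_ : (1 < _)%N = true) // !mxE (insubd_ord _ lt_ak) (insubd_ord _ (ltnW lt_ak)).
Qed.

(* Entry [(c, a+1)] of [L B = H^T] reads [alpha_(a+2) L_(c,a+1) + beta_(a+2) L_(c,a) = H_(a+1,c)],
   which vanishes for [a > c] and equals [beta_(a+2)] for [a = c]. *)
Lemma Lk_upper (c a : 'I_k) : (c < a)%N -> L c a = 0.
Proof.
case: a => a; elim: a => [|a IHa] lt_ak /= lt_ca; first by rewrite ltn0 in lt_ca.
have al_neq0 : al a.+2 != 0 by apply: alpha_neq0; lia.
suff : al a.+2 * L c (Ordinal lt_ak) = 0.
  by move/eqP; rewrite mulf_eq0 (negbTE al_neq0) => /eqP.
have := Hk_sub c lt_ak; rewrite mxE /= leqNgt lt_ca /= eqSS.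
have [eq_ac | ne_ac] := eqVneq a c.
  rewrite (_ : Ordinal (ltnW lt_ak) = c) ?Lk_diag ?mulr1; last exact: val_inj.
  by rewrite -eq_ac => /eqP; rewrite eq_sym -subr_eq0 addrK => /eqP.
rewrite IHa /=; first by rewrite mulr0 addr0 => /esym.
lia.
Qed.

Lemma Lk_unit_lower_trig : unit_lower_trig L.
Proof.
split; last exact: Lk_diag.
by apply/is_trig_mxP => i j; exact: Lk_upper.
Qed.

End Recurrence.

Theorem mainTheorem7 (R : rcfType) (m n : nat)
  (M : 'M[R]_m) (A : 'M[R]_(m, n)) (C N : 'M[R]_n) (b : 'cV[R]_n) (k : nat) :
  (n <= m)%N ->
  posdef M ->
  \rank A = n ->
  C^T = C -> possemidef C ->
  N^T = N -> posdef N ->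
  b != 0 ->
  (1 <= k)%N ->
  (* the recurrence has not stopped before step k and all quantities are defined *)
  (forall j, (2 <= j <= k)%N -> beta M A C N b j != 0) ->
  (forall j, (1 <= j <= k)%N -> alpha M A C N b j != 0) ->
  let Q := Qk M A C N b k in
  let V := Vk M A C N b k in
  let T := Tk M A C N b k in
  let D := Dk M A C N b k in
  let B := Bk M A C N b k in
  let H := Hk M A C N b k in
  let L := Lk M A C N b k in
  let g := gv M A C N b k in
  let S := A^T *m invmx M *m A + C in
  Q = D *m B /\
  A *m Q = M *m V *m B /\
  C *m Q = T *m B /\
  Q^T *m N *m Q = 1%:M /\
  A^T *m V + T = N *m Q *m H + N *m g *m (ek R k)^T /\
  H = B^T *m L^T /\ unit_lower_trig L /\
  invmx N *m S *m Q = Q *m (H *m B) + alpha M A C N b k *: (g *m (ek R k)^T).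
Proof.
move=> _ M_pd _ C_sym _ N_sym N_pd b_neq0 k_gt0 beta_neq0 alpha_neq0 /=.
split; first exact: Qk_factor.
split; first exact: mulmx_A_Qk.
split; first exact: mulmx_C_Qk.
split; first exact: Qk_orthonormal.
split; first exact: AtVk_add_Tk.
split; first exact: Hk_factor.
split; first exact: Lk_unit_lower_trig.
exact: N_Schur_Qk.
Qed.
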